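(* Let $\alpha>0$, $0<p<1$ and $\beta_1,\beta_2,\beta_3>0$. Let $V_1,V_2,V_3$ be independent random variables with $V_i\sim EDW(\alpha,p,\beta_i)$, and set $X_1=\max\{V_1,V_3\}$, $X_2=\max\{V_2,V_3\}$. Then for $x_1,x_2\in\mathbb{N}_0$ the joint probability mass function $f_{X_1,X_2}(x_1,x_2)=P(X_1=x_1,X_2=x_2)$ is $$f_{X_1,X_2}(x_1,x_2)=\begin{cases} f_{EDW}(x_1;\alpha,p,\beta_1+\beta_3)\,f_{EDW}(x_2;\alpha,p,\beta_2) & \text{if } x_1<x_2,\\ f_{EDW}(x_1;\alpha,p,\beta_1)\,f_{EDW}(x_2;\alpha,p,\beta_2+\beta_3) & \text{if } x_2<x_1,\\ [1-p^{(x+1)^{\alpha}}]^{\beta_1}f_{EDW}(x;\alpha,p,\beta_2+\beta_3)-[1-p^{x^{\alpha}}]^{\beta_1+\beta_3}f_{EDW}(x;\alpha,p,\beta_2) & \text{if } x_1=x_2=x.\end{cases}$$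
   Context: The exponentiated discrete Weibull distribution $EDW(\alpha,p,\beta)$ ($\alpha,\beta>0$, $0<p<1$) is the distribution on $\mathbb{N}_0=\{0,1,2,\dots\}$ with cumulative distribution function $F_{EDW}(x;\alpha,p,\beta)=[1-p^{([x]+1)^{\alpha}}]^{\beta}$ for real $x\ge 0$, where $[x]$ is the largest integer $\le x$; its probability mass function is $f_{EDW}(x;\alpha,p,\beta)=[1-p^{(x+1)^{\alpha}}]^{\beta}-[1-p^{x^{\alpha}}]^{\beta}$, $x\in\mathbb{N}_0$ (with $p^{0}=1$). *)

From HB Require Import structures.
From mathcomp Require Import all_boot all_order all_algebra.
From mathcomp Require Import all_classical all_reals all_analysis.
Set Implicit Arguments. Unset Strict Implicit. Unset Printing Implicit Defensive.
Import Order.TTheory GRing.Theory Num.Theory.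
Local Open Scope ring_scope.
Local Open Scope classical_set_scope.

(* G(k) = [1 - p^{k^alpha}]^beta, so that the EDW cdf is F(x) = G([x]+1)
   (with the analysis convention 0 `^ alpha = 0 for alpha <> 0, so p^{0^alpha} = 1). *)
Definition edw_G (R : realType) (alpha p beta : R) (k : nat) : R :=
  (1 - p `^ (k%:R `^ alpha)) `^ beta.

Definition f_EDW (R : realType) (x : nat) (alpha p beta : R) : R :=
  edw_G alpha p beta x.+1 - edw_G alpha p beta x.

Definition indep3_nat d (T : measurableType d) (R : realType)
  (P : probability T R) (V1 V2 V3 : T -> nat) : Prop :=
  forall a b c : nat,
    P [set t | V1 t = a /\ V2 t = b /\ V3 t = c] =
    (P [set t | V1 t = a] * P [set t | V2 t = b] * P [set t | V3 t = c])%E.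

From HB Require Import structures.
From mathcomp Require Import all_boot all_order all_algebra.
From mathcomp Require Import all_classical all_reals all_analysis.
From mathcomp Require Import ring zify.
Set Implicit Arguments.
Unset Strict Implicit.
Unset Printing Implicit Defensive.

Import Order.TTheory GRing.Theory Num.Theory.
Local Open Scope ring_scope.
Local Open Scope classical_set_scope.

(* Split the event {max(V1,V3) = x1, max(V2,V3) = x2} according to V3: either
   V3 < min(x1,x2), which forces V1 = x1 and V2 = x2, or V3 = min(x1,x2), and then
   Vi ranges over [0, xi] if xi is the minimum and equals xi otherwise.  Both pieces
   are product events, whose probabilities factor by independence into sums of pmfs.
   For the EDW law these sums telescope to G_beta(n) = [1 - p^(n^alpha)]^beta, and
   G_(beta + beta') = G_beta * G_beta' turns the two terms into the three cases. *)

Section nat_valued_events.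
Context d (T : measurableType d) (R : realType) (V : T -> nat).
Hypothesis mV : forall k, measurable [set t | V t = k].

Lemma set_mem_cons (a : nat) (s : seq nat) :
  [set t | V t \in a :: s] = [set t | V t = a] `|` [set t | V t \in s].
Proof.
apply/seteqP; split => t /=; rewrite in_cons.
  by case/orP => [/eqP|]; [left|right].
by case=> [->|->]; rewrite ?eqxx ?orbT.
Qed.

Lemma measurable_mem_seq (s : seq nat) : measurable [set t | V t \in s].
Proof.
elim: s => [|a s IHs]; last by rewrite set_mem_cons; exact: measurableU.
by rewrite (_ : [set t | _] = set0) //; apply/seteqP; split => t.
Qed.

Lemma measure_setI_mem_seq (mu : {measure set T -> \bar R}) (A : set T) (s : seq nat) :
  measurable A -> uniq s ->
  mu ([set t | V t \in s] `&` A) = (\sum_(a <- s) mu ([set t | V t = a] `&` A))%E.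
Proof.
move=> mA; elim: s => [_|a s IHs /= /andP[a_notin_s uniq_s]].
  by rewrite big_nil (_ : _ `&` _ = set0) ?measure0 //; apply/seteqP; split => t [].
have mVs := measurable_mem_seq s.
rewrite big_cons -IHs // set_mem_cons setIUl measureU //; try exact: measurableI.
apply/seteqP; split => t // [[/= Vta _] [/= Vts _]].
by move: a_notin_s; rewrite -Vta Vts.
Qed.

End nat_valued_events.

Section independent_triple.
Context d (T : measurableType d) (R : realType) (P : probability T R).
Variables (V1 V2 V3 : T -> nat) (f1 f2 f3 : nat -> R).
Hypotheses (mV1 : forall k, measurable [set t | V1 t = k])
  (mV2 : forall k, measurable [set t | V2 t = k])
  (mV3 : forall k, measurable [set t | V3 t = k]).
Hypothesis V_indep : indep3_nat P V1 V2 V3.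
Hypotheses (pmf1 : forall x, P [set t | V1 t = x] = (f1 x)%:E)
  (pmf2 : forall x, P [set t | V2 t = x] = (f2 x)%:E)
  (pmf3 : forall x, P [set t | V3 t = x] = (f3 x)%:E).

Lemma measurable_box (s1 s2 s3 : seq nat) :
  measurable [set t | V1 t \in s1 /\ V2 t \in s2 /\ V3 t \in s3].
Proof. by do 2?apply: measurableI; exact: measurable_mem_seq. Qed.

Lemma probability_box (s1 s2 s3 : seq nat) : uniq s1 -> uniq s2 -> uniq s3 ->
  P [set t | V1 t \in s1 /\ V2 t \in s2 /\ V3 t \in s3] =
  ((\sum_(a <- s1) f1 a) * (\sum_(b <- s2) f2 b) * (\sum_(c <- s3) f3 c))%:E.
Proof.
move=> uniq_s1 uniq_s2 uniq_s3.
have mV2s := measurable_mem_seq mV2 s2; have mV3s := measurable_mem_seq mV3 s3.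
rewrite -mulrA big_distrl -sumEFin.
rewrite (measure_setI_mem_seq mV1 _ (measurableI _ _ mV2s mV3s) uniq_s1).
apply: eq_bigr => a _; rewrite big_distrl big_distrr -sumEFin.
rewrite setICA (measure_setI_mem_seq mV2 _ (measurableI _ _ (mV1 a) mV3s) uniq_s2).
apply: eq_bigr => b _; rewrite big_distrr big_distrr -sumEFin.
rewrite setIA setIC (measure_setI_mem_seq mV3 _ (measurableI _ _ (mV2 b) (mV1 a)) uniq_s3).
apply: eq_bigr => c _.
rewrite (_ : _ `&` _ = [set t | V1 t = a /\ V2 t = b /\ V3 t = c]).
  by move: (V_indep a b c); rewrite pmf1 pmf2 pmf3 -!EFinM -mulrA.
by apply/seteqP; split => t /=; tauto.
Qed.

Lemma max_pair_pmf (x1 x2 : nat) :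
  P [set t | maxn (V1 t) (V3 t) = x1 /\ maxn (V2 t) (V3 t) = x2] =
  (f1 x1 * f2 x2 * \sum_(0 <= c < minn x1 x2) f3 c +
   (if (x1 <= x2)%N then \sum_(0 <= a < x1.+1) f1 a else f1 x1) *
   (if (x2 <= x1)%N then \sum_(0 <= b < x2.+1) f2 b else f2 x2) *
   f3 (minn x1 x2))%:E.
Proof.
set m := minn x1 x2.
pose upto_if (b : bool) (x : nat) := if b then index_iota 0 x.+1 else [:: x].
have uniq_upto_if b x : uniq (upto_if b x).
  by case: b => //; exact: iota_uniq.
have sum_upto_if b x f : \sum_(a <- upto_if b x) f a =
    if b then \sum_(0 <= a < x.+1) f a else f x :> R.
  by case: b; rewrite ?big_seq1.
have uniq_iota_m : uniq (index_iota 0 m) by exact: iota_uniq.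
have -> : [set t | maxn (V1 t) (V3 t) = x1 /\ maxn (V2 t) (V3 t) = x2] =
    [set t | V1 t \in [:: x1] /\ V2 t \in [:: x2] /\ V3 t \in index_iota 0 m] `|`
    [set t | V1 t \in upto_if (x1 <= x2)%N x1 /\ V2 t \in upto_if (x2 <= x1)%N x2 /\
             V3 t \in [:: m]].
  apply/seteqP; split => t /=; rewrite /upto_if /m;
    by case: (leqP x1 x2); case: (leqP x2 x1); rewrite ?mem_seq1 ?mem_index_iota; lia.
have box1 := @probability_box [:: x1] [:: x2] _ isT isT uniq_iota_m.
have box2 := @probability_box _ _ [:: m]
  (uniq_upto_if (x1 <= x2)%N x1) (uniq_upto_if (x2 <= x1)%N x2) isT.
rewrite !big_seq1 !sum_upto_if in box1 box2.
rewrite EFinD -box1 -box2; apply: measureU; try exact: measurable_box.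
apply/seteqP; split => t // [[_ [_ V3_lt_m]] [_ [_ V3_eq_m]]].
by move: V3_lt_m V3_eq_m; rewrite mem_index_iota mem_seq1; lia.
Qed.

End independent_triple.

Section edw.
Variables (R : realType) (alpha p : R).

Lemma edw_G0 (beta : R) : alpha != 0 -> beta != 0 -> edw_G alpha p beta 0 = 0.
Proof. by move=> alpha_neq0 beta_neq0; rewrite /edw_G mulr0n powR0 // powRr0 subrr powR0. Qed.

Lemma sum_f_EDW (beta : R) (n : nat) : alpha != 0 -> beta != 0 ->
  \sum_(0 <= x < n) f_EDW x alpha p beta = edw_G alpha p beta n.
Proof. by move=> alpha_neq0 beta_neq0; rewrite telescope_sumr // edw_G0 // subr0. Qed.

Lemma edw_GD (beta1 beta2 : R) (k : nat) : beta1 + beta2 != 0 ->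
  edw_G alpha p (beta1 + beta2) k = edw_G alpha p beta1 k * edw_G alpha p beta2 k.
Proof. by move=> /negbTE beta12_neq0; rewrite /edw_G powRD // beta12_neq0. Qed.

End edw.

Theorem mainTheorem2 (R : realType) (d : measure_display) (T : measurableType d)
  (P : probability T R) (V1 V2 V3 : T -> nat) (alpha p b1 b2 b3 : R) :
  0 < alpha -> 0 < p -> p < 1 -> 0 < b1 -> 0 < b2 -> 0 < b3 ->
  (forall k : nat, measurable [set t | V1 t = k]) ->
  (forall k : nat, measurable [set t | V2 t = k]) ->
  (forall k : nat, measurable [set t | V3 t = k]) ->
  indep3_nat P V1 V2 V3 ->
  (forall x : nat, P [set t | V1 t = x] = (f_EDW x alpha p b1)%:E) ->
  (forall x : nat, P [set t | V2 t = x] = (f_EDW x alpha p b2)%:E) ->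
  (forall x : nat, P [set t | V3 t = x] = (f_EDW x alpha p b3)%:E) ->
  forall x1 x2 : nat,
    P [set t | maxn (V1 t) (V3 t) = x1 /\ maxn (V2 t) (V3 t) = x2] =
    (if (x1 < x2)%N then f_EDW x1 alpha p (b1 + b3) * f_EDW x2 alpha p b2
     else if (x2 < x1)%N then f_EDW x1 alpha p b1 * f_EDW x2 alpha p (b2 + b3)
     else (1 - p `^ ((x1.+1)%:R `^ alpha)) `^ b1 * f_EDW x1 alpha p (b2 + b3)
          - (1 - p `^ ((x1%:R) `^ alpha)) `^ (b1 + b3) * f_EDW x1 alpha p b2)%:E.
Proof.
move=> alpha_gt0 _ _ b1_gt0 b2_gt0 b3_gt0 mV1 mV2 mV3 V_indep pmf1 pmf2 pmf3 x1 x2.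
rewrite (max_pair_pmf mV1 mV2 mV3 V_indep pmf1 pmf2 pmf3); congr EFin.
rewrite !sum_f_EDW ?gt_eqF //.
rewrite -/(edw_G alpha p b1 x1.+1) -/(edw_G alpha p (b1 + b3) x1) /f_EDW.
rewrite !edw_GD ?gt_eqF ?addr_gt0 //.
set G := edw_G alpha p; clearbody G.
by rewrite /minn; case: ltngtP => [_|_|<-]; ring.
Qed.
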